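(* For all automata $A$ and $B$: $A\le_F B$ if and only if there exists an automaton $C$ with $A\le_H C$ and $C\le_R B$.
   Context: An automaton $A$ consists of a set $\mathrm{states}(A)$ of states, a nonempty set $\mathrm{start}(A)\subseteq\mathrm{states}(A)$ of start states, a set $\mathrm{acts}(A)$ of actions containing a distinguished internal action $\tau$, and a set $\mathrm{steps}(A)\subseteq\mathrm{states}(A)\times\mathrm{acts}(A)\times\mathrm{states}(A)$ of steps; write $s\xrightarrow{a}_A t$ for $(s,a,t)\in\mathrm{steps}(A)$. For a relation $R$ write $R[s]=\{u\mid (s,u)\in R\}$. A step refinement from $A$ to $B$ is a partial function $r:\mathrm{states}(A)\rightharpoonup\mathrm{states}(B)$ such that (1) if $s\in\mathrm{start}(A)$ then $s\in\mathrm{dom}(r)$ and $r(s)\in\mathrm{start}(B)$; (2) if $s\xrightarrow{a}_A t$ and $s\in\mathrm{dom}(r)$ then $t\in\mathrm{dom}(r)$ and either $r(s)=r(t)$ and $a=\tau$, or $r(s)\xrightarrow{a}_B r(t)$. Write $A\le_R B$ if one exists. A normed forward simulation from $A$ to $B$ is a pair $(f,n)$ where $f\subseteq\mathrm{states}(A)\times\mathrm{states}(B)$ and $n:\mathrm{steps}(A)\times\mathrm{states}(B)\to S$ for some set $S$ with a well-founded strict order $<$, such that: (1) if $s\in\mathrm{start}(A)$ then $f[s]\cap\mathrm{start}(B)\neq\emptyset$; (2) if $s\xrightarrow{a}_A t$ and $u\in f[s]$ then (a) $u\in f[t]$ and $a=\tau$, or (b) there is $v\in f[t]$ with $u\xrightarrow{a}_B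 v$, or (c) there is $v\in f[s]$ with $u\xrightarrow{\tau}_B v$ and $n(s\xrightarrow{a}t,v)<n(s\xrightarrow{a}t,u)$. Write $A\le_F B$ if one exists. A normed history relation from $A$ to $B$ is a pair $(r,n)$ such that $r$ is a step refinement from $B$ to $A$ and $(r^{-1},n)$ is a normed forward simulation from $A$ to $B$. Write $A\le_H B$ if one exists. *)

From Stdlib Require Import Relations Wellfounded.


Record Automaton (Act : Type) (tau : Act) : Type := {
  states : Type;
  start : states -> Prop;
  start_nonempty : exists s, start s;
  acts : Act -> Prop;
  tau_in_acts : acts tau;
  steps : states -> Act -> states -> Prop;
  steps_acts : forall s a t, steps s a t -> acts a
}.

Arguments Automaton : clear implicits.
Arguments states {Act tau} _.
Arguments start {Act tau} _ _.
Arguments acts {Act tau} _ _.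
Arguments steps {Act tau} _ _ _ _.

Section Defs.
Variables (Act : Type) (tau : Act).

Definition step_refinement (A B : Automaton Act tau)
    (r : states A -> option (states B)) : Prop :=
  (forall s, start A s -> exists u, r s = Some u /\ start B u) /\
  (forall s a t u, steps A s a t -> r s = Some u ->
     exists v, r t = Some v /\ ((u = v /\ a = tau) \/ steps B u a v)).

Definition refines_R (A B : Automaton Act tau) : Prop :=
  exists r, step_refinement A B r.

Definition wf_strict_order (S : Type) (lt : S -> S -> Prop) : Prop :=
  (forall x, ~ lt x x) /\ transitive S lt /\ well_founded lt.

(* Normed forward simulation; the norm n is given on the step s -a-> t
   (as its three components) and a state of B. *)
Definition normed_forward_simulation (A B : Automaton Act tau)
    (f : states A -> states B -> Prop) (S : Type) (lt : S -> S -> Prop)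
    (n : states A -> Act -> states A -> states B -> S) : Prop :=
  wf_strict_order S lt /\
  (forall s, start A s -> exists u, f s u /\ start B u) /\
  (forall s a t u, steps A s a t -> f s u ->
     (f t u /\ a = tau) \/
     (exists v, f t v /\ steps B u a v) \/
     (exists v, f s v /\ steps B u tau v /\ lt (n s a t v) (n s a t u))).

Definition refines_F (A B : Automaton Act tau) : Prop :=
  exists f (S : Type) (lt : S -> S -> Prop) n,
    normed_forward_simulation A B f S lt n.

Definition inv_rel (A B : Automaton Act tau) (r : states B -> option (states A))
    : states A -> states B -> Prop :=
  fun s u => r u = Some s.

Definition refines_H (A B : Automaton Act tau) : Prop :=
  exists (r : states B -> option (states A)) (S : Type) (lt : S -> S -> Prop) n,
    step_refinement B A r /\ normed_forward_simulation A B (inv_rel A B r) S lt n.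

End Defs.

Arguments step_refinement {Act tau} A B r.
Arguments refines_R {Act tau} A B.
Arguments normed_forward_simulation {Act tau} A B f S lt n.
Arguments refines_F {Act tau} A B.
Arguments inv_rel {Act tau} A B r _ _.
Arguments refines_H {Act tau} A B.

(* A normed forward simulation A -> B factors through the automaton C whose
   states are the related pairs (s, u): C moves either jointly with A (with B
   following or stuttering) or by a tau-step of B alone.  Projecting to A is a
   history relation and projecting to B a step refinement.
   Conversely, a normed forward simulation f : A -> C followed by a step
   refinement g : C -> B is again a normed forward simulation: a tau-step of C
   either becomes a tau-step of B or disappears under g, so the new norm counts
   the tau-steps B still has to take before matching the step of A, which is
   finite because the norm of f decreases along C's tau-steps. *)
From Stdlib Require Import Arith Wf_nat Classical ClassicalEpsilon Lia.

Definition least_nat (P : nat -> Prop) : nat :=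
  epsilon (inhabits 0) (fun k => P k /\ forall j, P j -> k <= j).

Lemma least_natP (P : nat -> Prop) :
  (exists k, P k) -> P (least_nat P) /\ forall j, P j -> least_nat P <= j.
Proof.
  intro HP. unfold least_nat. apply epsilon_spec.
  destruct (dec_inh_nat_subset_has_unique_least_element P (fun k => classic (P k)) HP)
    as [k [Hk _]].
  now exists k.
Qed.

Lemma wf_strict_order_lt : wf_strict_order nat lt.
Proof. split; [exact Nat.lt_irrefl | split; [exact Nat.lt_trans | exact lt_wf]]. Qed.

Section SimulationThenRefinement.
Variables (Act : Type) (tau : Act) (A C B : Automaton Act tau).
Variables (f : states A -> states C -> Prop) (Norm : Type) (ltN : Norm -> Norm -> Prop)
  (n : states A -> Act -> states A -> states C -> Norm) (g : states C -> option (states B)).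
Hypothesis f_sim : normed_forward_simulation A C f Norm ltN n.
Hypothesis g_ref : step_refinement C B g.

Definition rel_comp_ref (s : states A) (w : states B) : Prop :=
  exists u, f s u /\ g u = Some w.

Fixpoint matches_after (s : states A) (a : Act) (t : states A) (k : nat) (w : states B)
    : Prop :=
  match k with
  | 0 => (rel_comp_ref t w /\ a = tau) \/ (exists v, rel_comp_ref t v /\ steps B w a v)
  | S k => exists v, rel_comp_ref s v /\ steps B w tau v /\ matches_after s a t k v
  end.

Lemma matches_after_ex s a t u : steps A s a t -> f s u ->
  forall w, g u = Some w -> exists k, matches_after s a t k w.
Proof.
  intros Hst.
  destruct f_sim as [[_ [_ wf_ltN]] [_ f_step]]. destruct g_ref as [_ g_step].
  remember (n s a t u) as x eqn:Hx. revert u Hx.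
  induction x as [x IH] using (well_founded_induction wf_ltN).
  intros u -> Hu w Hgu.
  destruct (f_step s a t u Hst Hu) as [[Ht Ha] | [[v [Hv Huv]] | [v [Hv [Huv Hlt]]]]].
  - exists 0; left; split; [exists u |]; auto.
  - destruct (g_step u a v w Huv Hgu) as [w' [Hgv [[<- ->] | Hww']]].
    + exists 0; left; split; [exists v |]; auto.
    + exists 0; right; exists w'; split; [exists v |]; auto.
  - destruct (g_step u tau v w Huv Hgu) as [w' [Hgv [[<- _] | Hww']]].
    + exact (IH _ Hlt v eq_refl Hv w Hgv).
    + destruct (IH _ Hlt v eq_refl Hv w' Hgv) as [k Hk].
      exists (S k), w'; repeat split; [exists v |..]; auto.
Qed.

Definition match_norm (s : states A) (a : Act) (t : states A) (w : states B) : nat :=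
  least_nat (fun k => matches_after s a t k w).

Lemma normed_forward_simulation_comp_ref :
  normed_forward_simulation A B rel_comp_ref nat lt match_norm.
Proof.
  destruct f_sim as [_ [f_start _]]. destruct g_ref as [g_start _].
  split; [exact wf_strict_order_lt | split].
  - intros s Hs.
    destruct (f_start s Hs) as [u [Hu Hsu]]. destruct (g_start u Hsu) as [w [Hgu Hw]].
    exists w; split; [exists u |]; auto.
  - intros s a t w Hst [u [Hu Hgu]].
    destruct (least_natP _ (matches_after_ex s a t u Hst Hu w Hgu)) as [Hmatch _].
    unfold match_norm in *.
    destruct (least_nat _) as [| k]; [now destruct Hmatch; [left | right; left] |].
    destruct Hmatch as [v [Hv [Hwv Hk]]].
    right; right; exists v; repeat split; auto.
    (* the least bound at [v] is at most [k], one less than at [w] *)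
    destruct (least_natP (fun k => matches_after s a t k v) (ex_intro _ k Hk))
      as [_ Hleast].
    specialize (Hleast k Hk). lia.
Qed.

End SimulationThenRefinement.

Arguments normed_forward_simulation_comp_ref {Act tau A C B f Norm ltN n g} f_sim g_ref.

Section SimulationAutomaton.
Variables (Act : Type) (tau : Act) (A B : Automaton Act tau).
Variables (f : states A -> states B -> Prop) (Norm : Type) (ltN : Norm -> Norm -> Prop)
  (n : states A -> Act -> states A -> states B -> Norm).
Hypothesis f_sim : normed_forward_simulation A B f Norm ltN n.

Definition sim_state : Type := {p : states A * states B | f (fst p) (snd p)}.

Definition sim_fst (p : sim_state) : states A := fst (proj1_sig p).
Definition sim_snd (p : sim_state) : states B := snd (proj1_sig p).

Definition sim_start (p : sim_state) : Prop := start A (sim_fst p) /\ start B (sim_snd p).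

Definition sim_step (p : sim_state) (a : Act) (q : sim_state) : Prop :=
  (steps A (sim_fst p) a (sim_fst q) /\
     ((sim_snd p = sim_snd q /\ a = tau) \/ steps B (sim_snd p) a (sim_snd q))) \/
  (sim_fst p = sim_fst q /\ a = tau /\ steps B (sim_snd p) tau (sim_snd q)).

Definition sim_acts (a : Act) : Prop := acts A a \/ acts B a.

Lemma sim_start_nonempty : exists p, sim_start p.
Proof.
  destruct (start_nonempty _ _ A) as [s Hs]. destruct f_sim as [_ [f_start _]].
  destruct (f_start s Hs) as [u [Hsu Hu]].
  now exists (exist _ (s, u) Hsu).
Qed.

Lemma sim_step_acts p a q : sim_step p a q -> sim_acts a.
Proof.
  intros [[Hst _] | [_ [-> _]]]; left;
    [exact (steps_acts _ _ A _ _ _ Hst) | apply tau_in_acts].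
Qed.

Definition sim_automaton : Automaton Act tau :=
  {| states := sim_state; start := sim_start; start_nonempty := sim_start_nonempty;
     acts := sim_acts; tau_in_acts := or_introl (tau_in_acts _ _ A);
     steps := sim_step; steps_acts := sim_step_acts |}.

Lemma step_refinement_sim_fst :
  step_refinement sim_automaton A (fun p => Some (sim_fst p)).
Proof.
  split.
  - intros p [Hs _]; eauto.
  - intros p a q s Hpq [= <-]. exists (sim_fst q); split; [reflexivity |].
    destruct Hpq as [[Hst _] | [Heq [Ha _]]]; auto.
Qed.

Lemma step_refinement_sim_snd :
  step_refinement sim_automaton B (fun p => Some (sim_snd p)).
Proof.
  split.
  - intros p [_ Hu]; eauto.
  - intros p a q u Hpq [= <-]. exists (sim_snd q); split; [reflexivity |].
    destruct Hpq as [[_ Hu] | [_ [-> Hu]]]; auto.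
Qed.

Lemma normed_forward_simulation_sim_fst :
  normed_forward_simulation A sim_automaton
    (inv_rel A sim_automaton (fun p => Some (sim_fst p)))
    Norm ltN (fun s a t p => n s a t (sim_snd p)).
Proof.
  destruct f_sim as [wf_ltN [f_start f_step]].
  split; [exact wf_ltN | split].
  - intros s Hs. destruct (f_start s Hs) as [u [Hsu Hu]].
    now exists (exist _ (s, u) Hsu).
  - intros s a t [[s' u] Hsu] Hst Hs'; 
    unfold inv_rel, sim_fst in Hs'; cbn in Hs', Hsu; injection Hs' as ->.
    destruct (f_step s a t u Hst Hsu) as [[Htu Ha] | [[v [Htv Huv]] | [v [Hsv [Huv Hlt]]]]].
    + right; left; exists (exist _ (t, u) Htu); split; [reflexivity | left; split; auto].
    + right; left; exists (exist _ (t, v) Htv); split; [reflexivity | left; split; auto].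
    + right; right; exists (exist _ (s, v) Hsv); split; [reflexivity | split; [right | exact Hlt]]; auto.
Qed.

End SimulationAutomaton.

Arguments sim_fst {Act tau A B f} p.
Arguments sim_snd {Act tau A B f} p.
Arguments sim_automaton {Act tau A B f Norm ltN n} f_sim.

Theorem mainTheorem16 (Act : Type) (tau : Act) (A B : Automaton Act tau) :
  refines_F A B <-> exists C : Automaton Act tau, refines_H A C /\ refines_R C B.
Proof.
  split.
  - intros [f [Norm [ltN [n f_sim]]]].
    exists (sim_automaton f_sim); split.
    + exists (fun p => Some (sim_fst p)), Norm, ltN, (fun s a t p => n s a t (sim_snd p)).
      split; [apply step_refinement_sim_fst | apply normed_forward_simulation_sim_fst].
    + eexists; apply step_refinement_sim_snd.
  - intros [C [[r [Norm [ltN [n [_ r_sim]]]]] [g g_ref]]].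
    eexists _, nat, lt, _; exact (normed_forward_simulation_comp_ref r_sim g_ref).
Qed.
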